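(* Let $(X,\mathcal{O}(X))$ be a measurable space, $\mathcal{A}$ a unital $C^*$-algebra and $\mathcal{H}$ a Hilbert space. Let $\mathcal{I}:\mathcal{O}(X)\to CP(\mathcal{A},\mathcal{B}(\mathcal{H}))$ be a CP instrument with minimal bi-dilation $(\mathcal{K},\pi,E,V)$. Then for any $A\in\mathcal{O}(X)$, $\mathcal{I}(A)=0$ if and only if $(\pi E)(A)=0$. In particular, for $S\in\mathcal{O}(X)$, $\mathcal{I}$ is concentrated on $S$ if and only if $\pi E$ is concentrated on $S$.
   Context: A CP instrument is a map $\mathcal{I}$ from $\mathcal{O}(X)$ to the completely positive maps $\mathcal{A}\to\mathcal{B}(\mathcal{H})$ such that for all $a\in\mathcal{A}$, $h,k\in\mathcal{H}$, $A\mapsto\langle h,\mathcal{I}(A)(a)k\rangle$ is a countably additive complex measure; write $\mathcal{I}(A,a)=\mathcal{I}(A)(a)$. A minimal bi-dilation is a quadruple $(\mathcal{K},\pi,E,V)$ with $\pi:\mathcal{A}\to\mathcal{B}(\mathcal{K})$ a unital $*$-homomorphism, $E:\mathcal{O}(X)\to\mathcal{B}(\mathcal{K})$ a spectral measure commuting with $\pi$, $V\in\mathcal{B}(\mathcal{H},\mathcal{K})$, with $\mathcal{I}(A,a)=V^*\pi(a)E(A)V$ and $\overline{\mathrm{span}}\{\pi(a)E(A)Vh\}=\mathcal{K}$. $\pi E$ is the instrument $(\pi E)(A)(a)=\pi(a)E(A)$. An instrument $\mathcal{J}$ is concentrated on $S$ if $\mathcal{J}(A)=\mathcal{J}(A\cap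 S)$ for all $A\in\mathcal{O}(X)$. *)

From HB Require Import structures.
From mathcomp Require Import all_boot all_order all_algebra.
From mathcomp Require Import all_classical all_reals.
From mathcomp Require Import topology normedtype sequences measure.
From mathcomp Require Import complex.

Set Implicit Arguments.
Unset Strict Implicit.
Unset Printing Implicit Defensive.
Import Order.TTheory GRing.Theory Num.Theory.
Import numFieldNormedType.Exports.
Local Open Scope ring_scope.
Local Open Scope classical_set_scope.

Section OperatorDefs.
Variable R : realType.
Local Notation C := R[i].
Local Notation conj := (@conjc R).

(* An inner product, linear in the SECOND argument, conjugate-linear in the
   first (physics convention, matching <h, T k>). *)
Definition is_inner_product (V : lmodType C) (ip : V -> V -> C) : Prop :=
  [/\ (forall x y z : V, ip x (y + z) = ip x y + ip x z),
      (forall (x y : V) (c : C), ip x (c *: y) = c * ip x y),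
      (forall x y : V, ip y x = conj (ip x y)),
      (forall x : V, complex.Im (ip x x) = 0 /\ 0 <= complex.Re (ip x x)) &
      (forall x : V, ip x x = 0 -> x = 0)].

Definition ipnorm (V : lmodType C) (ip : V -> V -> C) (x : V) : R :=
  Num.sqrt (complex.Re (ip x x)).

Definition ip_complete (V : lmodType C) (ip : V -> V -> C) : Prop :=
  forall u : nat -> V,
    (forall e : R, 0 < e -> exists N : nat, forall m n : nat,
        (N <= m)%N -> (N <= n)%N -> ipnorm ip (u m - u n) < e) ->
    exists x : V, (fun n => ipnorm ip (u n - x)) @ \oo --> (0 : R).

Definition is_hilbert (V : lmodType C) (ip : V -> V -> C) : Prop :=
  is_inner_product ip /\ ip_complete ip.

Definition bounded_linear (V W : lmodType C) (ipV : V -> V -> C)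
    (ipW : W -> W -> C) (T : V -> W) : Prop :=
  [/\ (forall x y : V, T (x + y) = T x + T y),
      (forall (c : C) (x : V), T (c *: x) = c *: T x) &
      exists M : R, forall x : V, ipnorm ipW (T x) <= M * ipnorm ipV x].

Definition is_adjoint (V W : lmodType C) (ipV : V -> V -> C)
    (ipW : W -> W -> C) (T : V -> W) (Ts : W -> V) : Prop :=
  bounded_linear ipW ipV Ts /\ forall (x : V) (y : W), ipW (T x) y = ipV x (Ts y).

Definition is_unital_cstar (A : algType C) (star : A -> A) (nA : A -> R) : Prop :=
  (forall a b : A, star (a + b) = star a + star b) /\
  (forall (c : C) (a : A), star (c *: a) = conj c *: star a) /\
  (forall a b : A, star (a * b) = star b * star a) /\
  (forall a : A, star (star a) = a) /\
  (forall a : A, 0 <= nA a) /\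
  (forall a : A, nA a = 0 -> a = 0) /\
  (forall a b : A, nA (a + b) <= nA a + nA b) /\
  (forall (c : C) (a : A), nA (c *: a) = complex.ComplexField.Normc.normc c * nA a) /\
  (forall a b : A, nA (a * b) <= nA a * nA b) /\
  (forall u : nat -> A,
    (forall e : R, 0 < e -> exists N : nat, forall m n : nat,
       (N <= m)%N -> (N <= n)%N -> nA (u m - u n) < e) ->
    exists x : A, (fun n => nA (u n - x)) @ \oo --> (0 : R)) /\
  (forall a : A, nA (star a * a) = nA a ^+ 2).

(* phi is CP: phi is linear, each phi a is in B(H), and for every n and
   every B in M_n(A), the matrix [phi((B^* B)_{ij})] is a positive operator
   on H^n, i.e. sum_{i,j} <h_i, phi((B^*B)_{ij}) h_j> >= 0 for all h in H^n. *)
Definition is_CP (A : algType C) (star : A -> A) (H : lmodType C)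
    (ipH : H -> H -> C) (phi : A -> H -> H) : Prop :=
  [/\ (forall a b : A, phi (a + b) = (fun h => phi a h + phi b h)),
      (forall (c : C) (a : A), phi (c *: a) = (fun h => c *: phi a h)),
      (forall a : A, bounded_linear ipH ipH (phi a)) &
      (forall (n : nat) (B : 'I_n -> 'I_n -> A) (h : 'I_n -> H),
        let s := \sum_(i < n) \sum_(j < n)
                   ipH (h i) (phi (\sum_(k < n) star (B k i) * B k j) (h j)) in
        complex.Im s = 0 /\ 0 <= complex.Re s)].

Definition complex_meas_cadd (d : measure_display) (X : measurableType d)
    (mu : set X -> C) : Prop :=
  forall F : nat -> set X, (forall n, measurable (F n)) -> trivIset setT F ->
    (fun n => complex.Re (\sum_(i < n) mu (F i))) @ \oo --> complex.Re (mu (\bigcup_n F n)) /\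
    (fun n => complex.Im (\sum_(i < n) mu (F i))) @ \oo --> complex.Im (mu (\bigcup_n F n)).

Definition is_CP_instrument (d : measure_display) (X : measurableType d)
    (A : algType C) (star : A -> A) (H : lmodType C) (ipH : H -> H -> C)
    (I : set X -> A -> H -> H) : Prop :=
  (forall S, measurable S -> is_CP star ipH (I S)) /\
  (forall (a : A) (h k : H),
     complex_meas_cadd (fun S => ipH h (I S a k))).

Definition is_unital_star_hom (A : algType C) (star : A -> A) (K : lmodType C)
    (ipK : K -> K -> C) (pi : A -> K -> K) : Prop :=
  (forall a b : A, pi (a + b) = (fun x => pi a x + pi b x)) /\
  (forall (c : C) (a : A), pi (c *: a) = (fun x => c *: pi a x)) /\
  (forall a : A, bounded_linear ipK ipK (pi a)) /\
  (forall a b : A, pi (a * b) = (fun x => pi a (pi b x))) /\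
  pi 1 = id /\
  (forall (a : A) (x y : K), ipK x (pi (star a) y) = ipK (pi a x) y).

Definition is_spectral_measure (d : measure_display) (X : measurableType d)
    (K : lmodType C) (ipK : K -> K -> C) (E : set X -> K -> K) : Prop :=
  (forall S, measurable S -> bounded_linear ipK ipK (E S)) /\
  (forall S, measurable S -> forall x y : K, ipK x (E S y) = ipK (E S x) y) /\
  (forall S T, measurable S -> measurable T ->
     E (S `&` T) = (fun x => E S (E T x))) /\
  E set0 = (fun _ => 0) /\
  E setT = id /\
  (forall x y : K, complex_meas_cadd (fun S => ipK x (E S y))).

Definition is_minimal_bidilation (d : measure_display) (X : measurableType d)
    (A : algType C) (star : A -> A) (H : lmodType C) (ipH : H -> H -> C)
    (I : set X -> A -> H -> H)
    (K : lmodType C) (ipK : K -> K -> C) (pi : A -> K -> K)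
    (E : set X -> K -> K) (V : H -> K) (Vs : K -> H) : Prop :=
  is_unital_star_hom star ipK pi /\
  is_spectral_measure ipK E /\
  (forall S, measurable S -> forall a : A,
     (fun x => pi a (E S x)) = (fun x => E S (pi a x))) /\
  bounded_linear ipH ipK V /\
  is_adjoint ipH ipK V Vs /\
  (forall S, measurable S -> forall a : A,
     I S a = (fun h => Vs (pi a (E S (V h))))) /\
      (* closed linear span of {pi(a)E(S)Vh} is K *)
      (forall (x : K) (e : R), 0 < e ->
         exists (n : nat) (c : 'I_n -> C) (a : 'I_n -> A) (S : 'I_n -> set X)
                (h : 'I_n -> H),
           (forall i, measurable (S i)) /\
           ipnorm ipK (x - \sum_(i < n) c i *: pi (a i) (E (S i) (V (h i)))) < e).

End OperatorDefs.

From HB Require Import structures.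
From mathcomp Require Import all_boot all_order all_algebra.
From mathcomp Require Import all_classical all_reals.
From mathcomp Require Import topology normedtype sequences measure.
From mathcomp Require Import complex.
Import Order.TTheory GRing.Theory Num.Theory.
Import numFieldNormedType.Exports.
Local Open Scope ring_scope.
Local Open Scope classical_set_scope.

(* Both statements reduce to the vanishing of pi(a) P for an orthogonal
   projection P commuting with pi and E: P = E(S) for the first and
   P = 1 - E(S) for the second.  Since P commutes with everything,
   pi(a) P kills every generator pi(b) E(T) V h as soon as it kills the
   vectors P V h, and ||pi(c) P V h||^2 = <V h, pi(c^* c) P V h> is a
   value of the instrument; minimality (density of the generators) then
   gives pi(a) P = 0. *)

Set Implicit Arguments.
Unset Strict Implicit.
Unset Printing Implicit Defensive.

Section InnerProduct.
Variables (R : realType) (V : lmodType R[i]) (ip : V -> V -> R[i]).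
Hypothesis ip_inner : is_inner_product ip.

Lemma ip_rD x y z : ip x (y + z) = ip x y + ip x z.
Proof. by case: ip_inner. Qed.

Lemma ip_rZ x y c : ip x (c *: y) = c * ip x y.
Proof. by case: ip_inner. Qed.

Lemma ip_conj x y : ip y x = conjc (ip x y).
Proof. by case: ip_inner. Qed.

Lemma ip_r0 x : ip x 0 = 0.
Proof. by rewrite -(scale0r (0 : V)) ip_rZ mul0r. Qed.

Lemma ip_rB x y z : ip x (y - z) = ip x y - ip x z.
Proof. by rewrite ip_rD -scaleN1r ip_rZ mulN1r. Qed.

Lemma ip_lB x y z : ip (x - y) z = ip x z - ip y z.
Proof. by rewrite ip_conj ip_rB rmorphB /= -!ip_conj. Qed.

Lemma ip_self_eq0 x : ip x x = 0 -> x = 0.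
Proof. by case: ip_inner => _ _ _ _; apply. Qed.

Lemma ipnorm_ge0 x : 0 <= ipnorm ip x.
Proof. exact: sqrtr_ge0. Qed.

Lemma ipnorm_le0 x : ipnorm ip x <= 0 -> x = 0.
Proof.
move=> norm_le0; have /eqP : ipnorm ip x = 0.
  by apply/eqP; rewrite eq_le norm_le0 ipnorm_ge0.
rewrite sqrtr_eq0 => Re_le0.
apply: ip_self_eq0; case: ip_inner => _ _ _ /(_ x) + _.
case: (ip x x) Re_le0 => a b /= a_le0 [-> a_ge0].
by have -> : a = 0 by apply/eqP; rewrite eq_le a_le0 a_ge0.
Qed.

Definition is_orth_projection (P : V -> V) : Prop :=
  [/\ bounded_linear ip ip P,
      (forall x y, ip x (P y) = ip (P x) y) &
      (forall x, P (P x) = P x)].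

Lemma orth_projection_compl P :
  is_orth_projection P -> is_orth_projection (fun x => x - P x).
Proof.
move=> [[PD PZ _] P_sa P_id].
have PB x y : P (x - y) = P x - P y.
  by rewrite -scaleN1r PD PZ scaleN1r.
split=> [| x y | x]; last by rewrite PB P_id subrr subr0.
- split=> [x y | c x |]; first by rewrite PD opprD addrACA.
    by rewrite PZ scalerBr.
  exists 1 => x; rewrite mul1r /ipnorm ler_sqrt; last by case: ip_inner => _ _ _ /(_ x) [].
  have -> : ip (x - P x) (x - P x) = ip x x - ip (P x) (P x).
    by rewrite ip_lB !ip_rB -[ip (P x) x]P_sa -[ip (P x) (P x)]P_sa P_id subrr subr0.
  case: ip_inner => _ _ _ /(_ (P x)) [_] + _.
  by case: (ip x x) => a b; case: (ip (P x) (P x)) => a' b' /= a'_ge0; rewrite gerBl.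
- by rewrite ip_rB ip_lB P_sa.
Qed.

Definition spans_densely (G : set V) : Prop :=
  forall (x : V) (e : R), 0 < e ->
    exists n (c : 'I_n -> R[i]) (g : 'I_n -> V),
      (forall i, G (g i)) /\ ipnorm ip (x - \sum_(i < n) c i *: g i) < e.

End InnerProduct.

Section BoundedLinear.
Variables (R : realType) (U V : lmodType R[i]).
Variables (ipU : U -> U -> R[i]) (ipV : V -> V -> R[i]) (T : U -> V).
Hypothesis T_bounded : bounded_linear ipU ipV T.

Lemma blinD x y : T (x + y) = T x + T y.
Proof. by case: T_bounded. Qed.

Lemma blinZ c x : T (c *: x) = c *: T x.
Proof. by case: T_bounded. Qed.

Lemma blin0 : T 0 = 0.
Proof. by rewrite -(scale0r (0 : U)) blinZ scale0r. Qed.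

Lemma blinB x y : T (x - y) = T x - T y.
Proof. by rewrite -scaleN1r blinD blinZ scaleN1r. Qed.

Lemma bounded_linear_bound_gt0 :
  exists2 M, 0 < M & forall x, ipnorm ipV (T x) <= M * ipnorm ipU x.
Proof.
case: T_bounded => _ _ [M HM]; exists (`|M| + 1) => [|x]; first by rewrite ltr_pwDr.
apply: le_trans (HM x) _; apply: ler_wpM2r; first exact: sqrtr_ge0.
by rewrite (le_trans (ler_norm M)) // lerDl.
Qed.

End BoundedLinear.

Section BoundedLinearOperations.
Variables (R : realType) (U V W : lmodType R[i]).
Variables (ipU : U -> U -> R[i]) (ipV : V -> V -> R[i]) (ipW : W -> W -> R[i]).

Lemma bounded_linear_comp (T : U -> V) (S : V -> W) :
  bounded_linear ipU ipV T -> bounded_linear ipV ipW S ->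
  bounded_linear ipU ipW (fun x => S (T x)).
Proof.
move=> T_bounded S_bounded; split=> [x y | c x |].
- by rewrite (blinD T_bounded) (blinD S_bounded).
- by rewrite (blinZ T_bounded) (blinZ S_bounded).
have [M M_gt0 HM] := bounded_linear_bound_gt0 T_bounded.
have [N N_gt0 HN] := bounded_linear_bound_gt0 S_bounded.
exists (N * M) => x; rewrite -mulrA (le_trans (HN _)) // ler_pM2l //.
Qed.

Lemma bounded_linear_eq0_dense (T : U -> V) (G : set U) :
  is_inner_product ipV -> bounded_linear ipU ipV T -> spans_densely ipU G ->
  (forall y, G y -> T y = 0) -> forall x, T x = 0.
Proof.
move=> ipV_inner T_bounded G_dense TG0 x; apply: (ipnorm_le0 ipV_inner).
have [M M_gt0 HM] := bounded_linear_bound_gt0 T_bounded.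
apply/ler_addgt0Pr => e e_gt0; rewrite add0r.
have [n [c [g [Gg close]]]] := G_dense x (e / M) (divr_gt0 e_gt0 M_gt0).
have Ts0 : T (\sum_(i < n) c i *: g i) = 0.
  apply: (big_ind (fun v => T v = 0)); first exact: (blin0 T_bounded).
    by move=> u v Tu0 Tv0; rewrite (blinD T_bounded) Tu0 Tv0 addr0.
  by move=> i _; rewrite (blinZ T_bounded) TG0 ?scaler0.
have -> : T x = T (x - \sum_(i < n) c i *: g i) by rewrite (blinB T_bounded) Ts0 subr0.
rewrite (le_trans (HM _)) // -ler_pdivlMl // mulrC ltW //.
Qed.

End BoundedLinearOperations.

Section MinimalBidilation.
Variables (R : realType) (d : measure_display) (X : measurableType d).
Variables (A : algType R[i]) (star : A -> A).
Variables (H : lmodType R[i]) (ipH : H -> H -> R[i]) (I : set X -> A -> H -> H).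
Variables (K : lmodType R[i]) (ipK : K -> K -> R[i]).
Variables (pi : A -> K -> K) (E : set X -> K -> K) (V : H -> K) (Vs : K -> H).
Hypotheses (ipH_inner : is_inner_product ipH) (ipK_inner : is_inner_product ipK).
Hypothesis bidil : is_minimal_bidilation star ipH I ipK pi E V Vs.

Lemma pi_bounded a : bounded_linear ipK ipK (pi a).
Proof. by case: bidil => [[_ [_ [pi_b _]]] _]. Qed.

Lemma piM a b x : pi (a * b) x = pi a (pi b x).
Proof. by case: bidil => [[_ [_ [_ [-> _]]]] _]. Qed.

Lemma pi_star a x y : ipK x (pi (star a) y) = ipK (pi a x) y.
Proof. by case: bidil => [[_ [_ [_ [_ [_ ->]]]]] _]. Qed.

Lemma EI S T x : measurable S -> measurable T -> E (S `&` T) x = E S (E T x).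
Proof. by case: bidil => _ [[_ [_ [EI _]]] _] mS mT; rewrite EI. Qed.

Lemma ET x : E setT x = x.
Proof. by case: bidil => _ [[_ [_ [_ [_ [-> _]]]]] _]. Qed.

Lemma E_bounded S : measurable S -> bounded_linear ipK ipK (E S).
Proof. by case: bidil => _ [[E_b _] _]; apply: E_b. Qed.

Lemma E_orth_projection S : measurable S -> is_orth_projection ipK (E S).
Proof.
case: bidil => _ [[_ [E_sa _]] _] mS.
by split=> [|x y|x]; [exact: E_bounded | exact: E_sa | rewrite -EI // setIid].
Qed.

Lemma pi_E_comm S a x : measurable S -> pi a (E S x) = E S (pi a x).
Proof.
by case: bidil => _ [_ [comm _]] mS; have := congr1 (fun f => f x) (comm S mS a).
Qed.

Lemma ip_V_dilation S a h h' : measurable S ->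
  ipK (V h) (pi a (E S (V h'))) = ipH h (I S a h').
Proof.
by case: bidil => _ [_ [_ [_ [[_ adj] [dil _]]]]] mS; rewrite adj dil.
Qed.

Lemma I_dilation_eq0 S a h : measurable S -> pi a (E S (V h)) = 0 -> I S a h = 0.
Proof.
case: bidil => _ [_ [_ [_ [[Vs_bounded _] [dil _]]]]] mS piE0.
by rewrite dil // piE0 (blin0 Vs_bounded).
Qed.

Lemma I_dilation_congr S T a h : measurable S -> measurable T ->
  pi a (E S (V h)) = pi a (E T (V h)) -> I S a h = I T a h.
Proof. by case: bidil => _ [_ [_ [_ [_ [dil _]]]]] mS mT eqST; rewrite !dil // eqST. Qed.

Lemma dilation_generators_dense :
  spans_densely ipK [set y | exists b T h, measurable T /\ y = pi b (E T (V h))].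
Proof.
case: bidil => _ [_ [_ [_ [_ [_ dense]]]]] x e e_gt0.
have [n [c [a [T [h [mT close]]]]]] := dense x e e_gt0.
by exists n, c, (fun i => pi (a i) (E (T i) (V (h i)))); split=> // i; exists (a i), (T i), (h i).
Qed.

Section ReducingProjection.
Variable P : K -> K.
Hypotheses (P_proj : is_orth_projection ipK P)
  (P_pi : forall a x, P (pi a x) = pi a (P x))
  (P_E : forall T, measurable T -> forall x, P (E T x) = E T (P x)).

Lemma pi_proj_eq0 :
  (forall c h, ipK (V h) (pi c (P (V h))) = 0) -> forall a x, pi a (P x) = 0.
Proof.
move: P_proj => [P_bounded P_sa P_id] PV0 a.
have piPV0 c h : pi c (P (V h)) = 0.
  apply: (ip_self_eq0 ipK_inner).
  by rewrite -pi_star -piM -P_sa P_pi P_id.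
apply: (bounded_linear_eq0_dense ipK_inner _ dilation_generators_dense).
  exact: bounded_linear_comp P_bounded (pi_bounded a).
move=> _ [b [T [h [mT ->]]]].
by rewrite P_pi -piM P_E // pi_E_comm // piPV0 (blin0 (E_bounded mT)).
Qed.

End ReducingProjection.

Lemma instrument_eq0_iff S : measurable S ->
  (forall a h, I S a h = 0) <-> (forall a x, pi a (E S x) = 0).
Proof.
move=> mS; split=> [IS0 | piE0 a h]; last exact: I_dilation_eq0.
apply: pi_proj_eq0 => [| a x | T mT x | c h].
- exact: E_orth_projection.
- by rewrite pi_E_comm.
- by rewrite -!EI // setIC.
- by rewrite ip_V_dilation // IS0 (ip_r0 ipH_inner).
Qed.

Lemma instrument_concentrated_iff S : measurable S ->
  (forall B, measurable B -> forall a h, I B a h = I (B `&` S) a h) <->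
  (forall B, measurable B -> forall a x, pi a (E B x) = pi a (E (B `&` S) x)).
Proof.
move=> mS; split=> [IS B mB a x | piS B mB a h]; last first.
  by apply: I_dilation_congr => //; [exact: measurableI | exact: piS].
have /(_ a (E B x)) : forall a x, pi a (x - E S x) = 0.
  apply: pi_proj_eq0 => [| a' y | T mT y | c h].
  - exact/orth_projection_compl/E_orth_projection.
  - by rewrite (blinB (pi_bounded a')) pi_E_comm.
  - by rewrite (blinB (E_bounded mT)) -!EI // setIC.
  - rewrite (blinB (pi_bounded c)) (ip_rB ipK_inner) -{2}(ET (V h)).
    by rewrite !ip_V_dilation // IS // setTI subrr.
by rewrite (blinB (pi_bounded a)) -EI // setIC => /subr0_eq.
Qed.

End MinimalBidilation.

Theorem proposition2p16 (R : realType) (d : measure_display) (X : measurableType d)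
    (A : algType R[i]) (star : A -> A) (nA : A -> R)
    (H : lmodType R[i]) (ipH : H -> H -> R[i])
    (I : set X -> A -> H -> H)
    (K : lmodType R[i]) (ipK : K -> K -> R[i])
    (pi : A -> K -> K) (E : set X -> K -> K) (V : H -> K) (Vs : K -> H) :
  is_unital_cstar star nA ->
  is_hilbert ipH -> is_hilbert ipK ->
  is_CP_instrument star ipH I ->
  is_minimal_bidilation star ipH I ipK pi E V Vs ->
  (forall S : set X, measurable S ->
     ((forall (a : A) (h : H), I S a h = 0) <->
      (forall (a : A) (x : K), pi a (E S x) = 0))) /\
  (forall S : set X, measurable S ->
     ((forall B : set X, measurable B -> forall (a : A) (h : H),
          I B a h = I (B `&` S) a h) <->
      (forall B : set X, measurable B -> forall (a : A) (x : K),
          pi a (E B x) = pi a (E (B `&` S) x)))).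
Proof.
move=> _ [ipH_inner _] [ipK_inner _] _ bidil.
split=> S mS.
- exact: (instrument_eq0_iff ipH_inner ipK_inner bidil mS).
- exact: (instrument_concentrated_iff ipK_inner bidil mS).
Qed.
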